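(* Consider the queueing system in the context under MaxWeight with a diagonal matrix $\Delta$ with positive diagonal entries, in overload ($\rho\notin\mathcal{P}$). Let $H=\limsup_{t\to\infty}\langle \frac{X(t)}{t},\Delta\frac{X(t)}{t}\rangle$ and let $\eta$ be the limit of $X(t_c)/t_c$ along an increasing unbounded sequence $\{t_c\}$ with $\langle\eta,\Delta\eta\rangle=H$. Then for any increasing unbounded sequence $\{t_m\}$ with $\lim_{m\to\infty}X(t_m)/t_m=\mu$, $$\langle\mu,\Delta\eta\rangle\ge\langle\rho,\Delta\eta\rangle-\max_{S\in\mathcal{S}}\langle S,\Delta\eta\rangle.$$
   Context: Model: $Q$ queues, finite set $\mathcal{S}=\{S_1,\dots,S_N\}\subset\mathbb{R}^Q_{\ge0}$, discrete time. Arrivals $A(t)$ with $0\le A_q(t)\le\bar A_q<\infty$ and $\rho_q=\lim_{t\to\infty}\frac1t\sum_{s=0}^{t-1}A_q(s)\in(0,\infty)$. Departures $D_q(t)=\min\{S_q(t),X_q(t)\}$, $X(t+1)=X(t)+A(t)-D(t)$, $X(0)=0$, with $S(t)\in\arg\max_{S\in\mathcal{S}}\langle S,\Delta X(t)\rangle$. Stability region $\mathcal{P}=\{r\in\mathbb{R}^Q_{\ge0}: r\le\sum_n\alpha_nS_n\text{ for some }\alpha_n\ge0,\sum_n\alpha_n=1\}$. *)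

From Stdlib Require Import Reals List.
From Coquelicot Require Import Coquelicot.
Open Scope R_scope.

(* Vectors in R^Q are functions nat -> R; only the coordinates q < Q matter. *)
Definition vsum (Q : nat) (f : nat -> R) : R :=
  fold_right Rplus 0 (map f (seq 0 Q)).

Definition inner (Q : nat) (u v : nat -> R) : R := vsum Q (fun q => u q * v q).

(* Diagonal matrix Delta = diag(d) applied to a vector. *)
Definition diagmul (d : nat -> R) (v : nat -> R) : nat -> R := fun q => d q * v q.

Definition vscale (c : R) (v : nat -> R) : nat -> R := fun q => c * v q.

Definition in_stab_region (Q : nat) (Ss : list (nat -> R)) (r : nat -> R) : Prop :=
  (forall q, (q < Q)%nat -> 0 <= r q) /\
  exists alpha : nat -> R,
    (forall n, (n < length Ss)%nat -> 0 <= alpha n) /\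
    vsum (length Ss) alpha = 1 /\
    forall q, (q < Q)%nat ->
      r q <= vsum (length Ss) (fun n => alpha n * nth n Ss (fun _ => 0) q).

Definition incr_unbounded (t : nat -> nat) : Prop :=
  (forall m, (t m <= t (S m))%nat) /\ (forall N, exists m, (N <= t m)%nat).

Definition scaled_lim (Q : nat) (X : nat -> nat -> R) (t : nat -> nat) (mu : nat -> R) : Prop :=
  forall q, (q < Q)%nat -> is_lim_seq (fun m => X (t m) q / INR (t m)) (mu q).

From Stdlib Require Import Reals List Lra Lia.
From Coquelicot Require Import Coquelicot.
Open Scope R_scope.

(* With
   w = Delta eta >= 0, departures satisfy <D(t), w> <= <S(t), w> <= M, the
   maximal w-weight of a schedule, so telescoping X(t+1) = X(t) + A(t) - D(t)
   gives <X(t), w> >= <A(0) + ... + A(t-1), w> - t M.  Dividing by t_m and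
   letting m -> oo yields <mu, w> >= <rho, w> - M. *)

Lemma vsum_0 (f : nat -> R) : vsum 0 f = 0.
Proof. reflexivity. Qed.

Lemma vsum_S (Q : nat) (f : nat -> R) : vsum (S Q) f = vsum Q f + f Q.
Proof.
  unfold vsum. rewrite seq_S, map_app, fold_right_app. simpl.
  generalize (f Q). induction (map f (seq 0 Q)) as [|a l IH]; intros r; simpl.
  - lra.
  - rewrite IH. lra.
Qed.

Lemma vsum_ext (Q : nat) (f g : nat -> R) :
  (forall q, (q < Q)%nat -> f q = g q) -> vsum Q f = vsum Q g.
Proof.
  induction Q as [|Q IH]; intros H; [reflexivity|].
  rewrite !vsum_S, (H Q) by lia.
  rewrite IH; [reflexivity|]. intros q Hq. apply H. lia.
Qed.

Lemma vsum_le (Q : nat) (f g : nat -> R) :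
  (forall q, (q < Q)%nat -> f q <= g q) -> vsum Q f <= vsum Q g.
Proof.
  induction Q as [|Q IH]; intros H; rewrite ?vsum_0, ?vsum_S; [lra|].
  assert (vsum Q f <= vsum Q g) by (apply IH; intros; apply H; lia).
  assert (f Q <= g Q) by (apply H; lia).
  lra.
Qed.

Lemma vsum_add (Q : nat) (f g : nat -> R) :
  vsum Q (fun q => f q + g q) = vsum Q f + vsum Q g.
Proof. induction Q as [|Q IH]; rewrite ?vsum_0, ?vsum_S, ?IH; lra. Qed.

Lemma vsum_sub (Q : nat) (f g : nat -> R) :
  vsum Q (fun q => f q - g q) = vsum Q f - vsum Q g.
Proof. induction Q as [|Q IH]; rewrite ?vsum_0, ?vsum_S, ?IH; lra. Qed.

Lemma vsum_scal (Q : nat) (c : R) (f : nat -> R) :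
  vsum Q (fun q => c * f q) = c * vsum Q f.
Proof. induction Q as [|Q IH]; rewrite ?vsum_0, ?vsum_S, ?IH; lra. Qed.

Lemma is_lim_seq_vsum (Q : nat) (u : nat -> nat -> R) (l : nat -> R) :
  (forall q, (q < Q)%nat -> is_lim_seq (fun n => u n q) (l q)) ->
  is_lim_seq (fun n => vsum Q (u n)) (vsum Q l).
Proof.
  induction Q as [|Q IH]; intros H.
  - apply is_lim_seq_const.
  - apply (is_lim_seq_ext (fun n => vsum Q (u n) + u n Q)).
    { intros n. now rewrite vsum_S. }
    rewrite vsum_S. apply is_lim_seq_plus'; [apply IH; intros q Hq|]; apply H; lia.
Qed.

Lemma fold_right_Rmax_ge {T : Type} (l : list T) (f : T -> R) (a : R) (x : T) :
  In x l -> f x <= fold_right Rmax a (map f l).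
Proof.
  induction l as [|y l IH]; simpl; intros Hx; [contradiction|].
  destruct Hx as [<- | Hx]; [apply Rmax_l|].
  eapply Rle_trans; [apply IH, Hx | apply Rmax_r].
Qed.

Lemma Rinv_INR_nonneg (n : nat) : 0 <= / INR n.
Proof.
  destruct n as [|n]; [simpl; rewrite Rinv_0; lra|].
  apply Rlt_le, Rinv_0_lt_compat, lt_0_INR; lia.
Qed.

Lemma incr_unbounded_eventually (t : nat -> nat) :
  incr_unbounded t -> forall N, eventually (fun m => (N <= t m)%nat).
Proof.
  intros [Hmono Hunb] N. destruct (Hunb N) as [m0 Hm0].
  exists m0. intros m Hm. induction Hm as [|m Hm IH]; [exact Hm0|].
  specialize (Hmono m). lia.
Qed.

Fixpoint cum_arrivals (A : nat -> nat -> R) (t q : nat) : R :=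
  match t with O => 0 | S t => cum_arrivals A t q + A t q end.

Lemma cum_arrivals_sum_n (A : nat -> nat -> R) (t q : nat) :
  cum_arrivals A (S t) q = sum_n (fun s => A s q) t.
Proof.
  induction t as [|t IH].
  - rewrite sum_O. simpl. lra.
  - rewrite sum_Sn, <- IH. reflexivity.
Qed.

Lemma is_lim_seq_scaled_cum_arrivals (A : nat -> nat -> R) (q : nat) (r : R) (t : nat -> nat) :
  is_lim_seq (fun n => / INR (S n) * sum_n (fun s => A s q) n) r ->
  incr_unbounded t ->
  is_lim_seq (fun m => cum_arrivals A (t m) q / INR (t m)) r.
Proof.
  intros Hr Ht.
  apply (is_lim_seq_ext_loc (fun m => / INR (S (pred (t m))) * sum_n (fun s => A s q) (pred (t m)))).
  - destruct (incr_unbounded_eventually t Ht 1) as [m0 Hm0].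
    exists m0. intros m Hm. specialize (Hm0 m Hm).
    destruct (t m) as [|k]; [lia|]. simpl pred.
    rewrite cum_arrivals_sum_n. unfold Rdiv. ring.
  - apply (is_lim_seq_subseq (fun n => / INR (S n) * sum_n (fun s => A s q) n) _
      (fun m => pred (t m))); [|exact Hr].
    intros P [N HN]. destruct (incr_unbounded_eventually t Ht (S N)) as [m0 Hm0].
    exists m0. intros m Hm. apply HN. specialize (Hm0 m Hm). lia.
Qed.

Lemma is_lim_seq_scaled_inner (Q : nat) (Y : nat -> nat -> R) (t : nat -> nat)
    (L w : nat -> R) :
  (forall q, (q < Q)%nat -> is_lim_seq (fun m => Y (t m) q / INR (t m)) (L q)) ->
  is_lim_seq (fun m => inner Q (Y (t m)) w / INR (t m)) (inner Q L w).
Proof.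
  intros HL.
  apply (is_lim_seq_ext (fun m => vsum Q (fun q => Y (t m) q / INR (t m) * w q))).
  { intros m. unfold inner, Rdiv. rewrite Rmult_comm, <- vsum_scal.
    apply vsum_ext. intros q _. ring. }
  apply (is_lim_seq_vsum Q (fun m q => Y (t m) q / INR (t m) * w q)).
  intros q Hq. apply (is_lim_seq_scal_r _ (w q) (L q)), HL, Hq.
Qed.

Section Queue.

Variables (Q : nat) (A Sch X : nat -> nat -> R).
Hypothesis HX0 : forall q, X 0%nat q = 0.
Hypothesis HXstep : forall t q, X (S t) q = X t q + A t q - Rmin (Sch t q) (X t q).

Lemma queue_nonneg :
  (forall t q, (q < Q)%nat -> 0 <= A t q) -> forall t q, (q < Q)%nat -> 0 <= X t q.
Proof.
  intros HA. induction t as [|t IH]; intros q Hq.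
  - rewrite HX0. lra.
  - rewrite HXstep. pose proof (IH q Hq). pose proof (HA t q Hq).
    pose proof (Rmin_r (Sch t q) (X t q)). lra.
Qed.

Lemma workload_lower_bound (w : nat -> R) (M : R) :
  (forall q, (q < Q)%nat -> 0 <= w q) ->
  (forall t, inner Q (Sch t) w <= M) ->
  forall t, inner Q (cum_arrivals A t) w - INR t * M <= inner Q (X t) w.
Proof.
  intros Hw HM. induction t as [|t IH]; unfold inner in *.
  - rewrite (vsum_ext Q (fun q => X 0%nat q * w q) (fun q => 0 * w q))
      by (intros q _; now rewrite HX0).
    simpl. rewrite !vsum_scal. lra.
  - rewrite (vsum_ext Q (fun q => X (S t) q * w q)
      (fun q => (X t q * w q + A t q * w q) - Rmin (Sch t q) (X t q) * w q))
      by (intros q _; rewrite HXstep; ring).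
    rewrite (vsum_ext Q (fun q => cum_arrivals A (S t) q * w q)
      (fun q => cum_arrivals A t q * w q + A t q * w q))
      by (intros q _; simpl; ring).
    rewrite vsum_sub, !vsum_add, S_INR.
    assert (vsum Q (fun q => Rmin (Sch t q) (X t q) * w q) <= vsum Q (fun q => Sch t q * w q)).
    { apply vsum_le. intros q Hq. apply Rmult_le_compat_r; [apply Hw, Hq | apply Rmin_l]. }
    specialize (HM t). lra.
Qed.

End Queue.

Lemma scaled_lim_nonneg (Q : nat) (X : nat -> nat -> R) (t : nat -> nat) (eta : nat -> R) :
  (forall s q, (q < Q)%nat -> 0 <= X s q) ->
  scaled_lim Q X t eta -> forall q, (q < Q)%nat -> 0 <= eta q.
Proof.
  intros HX Heta q Hq.
  assert (H : Rbar_le 0 (eta q)).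
  { apply (is_lim_seq_le (fun _ => 0) (fun m => X (t m) q / INR (t m))).
    - intros m. apply Rmult_le_pos; [apply HX, Hq | apply Rinv_INR_nonneg].
    - apply is_lim_seq_const.
    - apply Heta, Hq. }
  exact H.
Qed.

Theorem lemma4
  (Q : nat)
  (Ss : list (nat -> R))                  (* the finite schedule set S_1..S_N *)
  (A : nat -> nat -> R)                   (* arrivals A(t)_q = A t q *)
  (Abar rho : nat -> R)
  (d : nat -> R)                          (* Delta = diag(d) *)
  (Sch : nat -> nat -> R)                 (* chosen schedule S(t) *)
  (X : nat -> nat -> R)                   (* queue lengths X(t) *)
  (eta mu : nat -> R) (tc tm : nat -> nat)
  (HSne : Ss <> nil)
  (HSnn : forall S, In S Ss -> forall q, (q < Q)%nat -> 0 <= S q)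
  (HA : forall t q, (q < Q)%nat -> 0 <= A t q <= Abar q)
  (Hrho_lim : forall q, (q < Q)%nat ->
      is_lim_seq (fun t => / INR (S t) * sum_n (fun s => A s q) t) (rho q))
  (Hrho_pos : forall q, (q < Q)%nat -> 0 < rho q)
  (Hd : forall q, (q < Q)%nat -> 0 < d q)
  (HX0 : forall q, X 0%nat q = 0)
  (HXstep : forall t q, X (S t) q = X t q + A t q - Rmin (Sch t q) (X t q))
  (HSin : forall t, In (Sch t) Ss)
  (HMW : forall t S, In S Ss -> inner Q S (diagmul d (X t)) <= inner Q (Sch t) (diagmul d (X t)))
  (Hover : ~ in_stab_region Q Ss rho)
  (Htc : incr_unbounded tc)
  (Heta : scaled_lim Q X tc eta)
  (HH : LimSup_seq (fun t => inner Q (vscale (/ INR t) (X t))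
                                     (diagmul d (vscale (/ INR t) (X t))))
        = Finite (inner Q eta (diagmul d eta)))
  (Htm : incr_unbounded tm)
  (Hmu : scaled_lim Q X tm mu) :
  inner Q mu (diagmul d eta) >=
    inner Q rho (diagmul d eta)
    - fold_right Rmax (inner Q (hd (fun _ => 0) Ss) (diagmul d eta))
        (map (fun S => inner Q S (diagmul d eta)) Ss).
Proof.
  set (w := diagmul d eta).
  set (M := fold_right Rmax _ _).
  assert (HXnn := queue_nonneg Q A Sch X HX0 HXstep (fun t q Hq => proj1 (HA t q Hq))).
  assert (Hw : forall q, (q < Q)%nat -> 0 <= w q).
  { intros q Hq. apply Rmult_le_pos; [apply Rlt_le, Hd, Hq|].
    exact (scaled_lim_nonneg Q X tc eta HXnn Heta q Hq). }
  assert (HM : forall t, inner Q (Sch t) w <= M)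
    by (intros t; apply (fold_right_Rmax_ge Ss (fun S => inner Q S w)), HSin).
  apply Rle_ge.
  enough (Hlim : Rbar_le (inner Q rho w - M) (inner Q mu w)) by exact Hlim.
  apply (is_lim_seq_le
    (fun m => inner Q (cum_arrivals A (tm m)) w / INR (tm m) - INR (tm m) * M / INR (tm m))
    (fun m => inner Q (X (tm m)) w / INR (tm m))).
  - intros m. unfold Rdiv. rewrite <- Rmult_minus_distr_r.
    apply Rmult_le_compat_r; [apply Rinv_INR_nonneg|].
    exact (workload_lower_bound Q A Sch X HX0 HXstep w M Hw HM (tm m)).
  - apply is_lim_seq_minus'.
    + apply is_lim_seq_scaled_inner. intros q Hq.
      exact (is_lim_seq_scaled_cum_arrivals A q (rho q) tm (Hrho_lim q Hq) Htm).
    + apply (is_lim_seq_ext_loc (fun _ => M)); [|apply is_lim_seq_const].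
      destruct (incr_unbounded_eventually tm Htm 1) as [m0 Hm0].
      exists m0. intros m Hm. specialize (Hm0 m Hm).
      field. apply not_0_INR. lia.
  - apply is_lim_seq_scaled_inner, Hmu.
Qed.
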